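(* Let $X$ be a finite set, let $k\ge 2$ be an integer, and let $\bm{c}$ be a choice function defined on the complete collection $\mathcal{B}=2^X$ of all non-empty subsets of $X$ (i.e. $\bm{c}(B)\in B$ for every non-empty $B\subseteq X$). Then $(\mathcal{B},\bm{c})$ is rationalizable with $k^{th}$-order choice under limited attention if and only if $\bm{c}$ satisfies both of the following axioms: (SARP$^k$) for all $x,y\in X$: if $x$ is $k^{th}$-order indirectly chosen over $y$, then $y$ is not $k^{th}$-order directly chosen over $x$; (WARP(LA$^k$)) for all non-empty $S,T\subseteq X$ and all $x,y\in S\cap T$ with $|T|\le k$: if $x=\bm{c}(S)$ and $y=\bm{c}(T)$, then $x=\bm{c}(S\setminus\{y\})$.
   Context: A strict preference relation on $X$ is a complete, transitive and asymmetric binary relation $\succ$. An attention filter is a map $\Gamma$ from non-empty subsets of $X$ to subsets of $X$ such that $\Gamma(B)\subseteq B$ for every $B$, and $\Gamma(B)=\Gamma(B\setminus\{x\})$ for every $B$ and every $x\in B\setminus\Gamma(B)$. A data set $(\mathcal{B},\bm{c})$, where $\mathcal{B}$ is a collection of non-empty subsets of $X$ and $\bm{c}(B)\in B$ for $B\in\mathcal{B}$, is rationalizable with $k^{th}$-order choice under limited attention if there exist a strict preference relation $\succ$ and an attention filter $\Gamma$ with $|\Gamma(B)|\ge\min\{|B|,k\}$ for all non-empty $B\subseteq X$, such that for every $B\in\mathcal{B}$, $\bm{c}(B)$ is the $\succ$-maximal element of $\Gamma(B)$. We say $x_1$ is $k^{th}$-order directly chosen over $x_2$ if there is $B\in\mathcal{B}$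 with $|B|\le k$, $x_1,x_2\in B$ and $x_1=\bm{c}(B)$. We say $x_1$ is $k^{th}$-order indirectly chosen over $x_n$ if there exist $x_2,\dots,x_{n-1}$ such that $x_i$ is $k^{th}$-order directly chosen over $x_{i+1}$ for each $i=1,\dots,n-1$. *)

From mathcomp Require Import all_boot.
From Stdlib Require Import Relation_Operators.
Set Implicit Arguments. Unset Strict Implicit. Unset Printing Implicit Defensive.

Section Defs.
Variable X : finType.

Definition strict_pref (r : rel X) : Prop :=
  (forall x y, x != y -> r x y \/ r y x) /\ transitive r /\
  (forall x y, r x y -> ~~ r y x).

Definition attention_filter (G : {set X} -> {set X}) : Prop :=
  forall B : {set X}, B != set0 ->
    G B \subset B /\
    (forall x, x \in B -> x \notin G B -> B :\ x != set0 -> G B = G (B :\ x)).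

Definition is_max (r : rel X) (A : {set X}) (x : X) : Prop :=
  x \in A /\ forall y, y \in A -> y != x -> r x y.

Definition rationalizable_k (k : nat) (c : {set X} -> X) : Prop :=
  exists (r : rel X) (G : {set X} -> {set X}),
    strict_pref r /\ attention_filter G /\
    (forall B : {set X}, B != set0 -> minn #|B| k <= #|G B|) /\
    (forall B : {set X}, B != set0 -> is_max r (G B) (c B)).

Definition dchosen (k : nat) (c : {set X} -> X) (x1 x2 : X) : Prop :=
  x1 != x2 /\ exists B : {set X}, [/\ #|B| <= k, x1 \in B, x2 \in B & x1 = c B].

Definition ichosen (k : nat) (c : {set X} -> X) : X -> X -> Prop :=
  clos_trans X (dchosen k c).

Definition SARP_k (k : nat) (c : {set X} -> X) : Prop :=
  forall x y : X, ichosen k c x y -> ~ dchosen k c y x.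

Definition WARP_LA_k (k : nat) (c : {set X} -> X) : Prop :=
  forall (S T : {set X}) (x y : X),
    S != set0 -> T != set0 -> x \in S :&: T -> y \in S :&: T -> x != y ->
    #|T| <= k -> x = c S -> y = c T -> x = c (S :\ y).

End Defs.

(* Necessity: in a rationalization, menus of at most k items are fully attended to, so direct
   choice reveals the preference; SARP^k then follows from its asymmetry and transitivity.  For
   WARP(LA^k), the item y chosen from a small menu T is worse than x = c(S), hence unattended in S,
   and removing it from S leaves the attention set, and so the choice, unchanged.

   Sufficiency: SARP^k makes indirect choice a strict partial order; extend it to a linear order
   and let Gamma(B) consist of c(B) and everything in B below it.  WARP(LA^k) applied to two-element
   menus shows that Gamma is an attention filter.  Applied to k-element menus containing c(B), it
   lets us delete items from B without changing the choice until a menu T with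
   min(|B|, k) <= |T| <= k and c(T) = c(B) remains; every other item of T is directly chosen below
   c(B), hence lies in Gamma(B). *)

From mathcomp Require Import all_boot zify.
From Stdlib Require Import Relation_Operators Operators_Properties ClassicalEpsilon.

Set Implicit Arguments.
Unset Strict Implicit.
Unset Printing Implicit Defensive.

Lemma is_max_uniq (X : finType) (r : rel X) (A : {set X}) x y :
  strict_pref r -> is_max r A x -> is_max r A y -> x = y.
Proof.
move=> [_ [_ r_asym]] [xA x_max] [yA y_max]; apply/eqP/negPn/negP => xy.
have rxy : r x y by apply: x_max; rewrite // eq_sym.
by move: (r_asym _ _ rxy); rewrite y_max.
Qed.

Lemma exists_subset_card_mem (T : finType) (B : {set T}) x m :
  x \in B -> 0 < m -> m <= #|B| -> exists A : {set T}, [/\ x \in A, A \subset B & #|A| = m].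
Proof.
move=> xB m_gt0; rewrite (cardsD1 x B) xB add1n => m_le.
have /card_geqP[s [s_uniq s_size sBx]] : m.-1 <= #|B :\ x| by rewrite -ltnS prednK.
have xs : x \notin s by apply/negP => /sBx; rewrite !inE eqxx.
exists (x |: [set:: s]); split; first exact: setU11.
  rewrite subUset sub1set xB; apply/subsetP => z; rewrite inE => /sBx.
  by rewrite inE => /andP[].
by rewrite cardsU1 inE xs cardsE (card_uniqP s_uniq) s_size add1n prednK.
Qed.

Lemma strict_linear_extension (T : finType) (R : T -> T -> Prop) :
  (forall x y z, R x y -> R y z -> R x z) -> (forall x, ~ R x x) ->
  exists r : rel T, strict_pref r /\ forall x y, R x y -> r x y.
Proof.
move=> R_trans R_irr.
pose below y := [set z | (excluded_middle_informative (R z y) : bool)].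
have belowP z y : reflect (R z y) (z \in below y).
  by rewrite inE; case: excluded_middle_informative => ?; constructor.
have below_lt x y : R x y -> #|below x| < #|below y|.
  move=> Rxy; apply: proper_card; apply/properP; split.
    by apply/subsetP => z /belowP Rzx; apply/belowP; exact: R_trans Rzx Rxy.
  by exists x; [apply/belowP | apply/belowP; exact: R_irr].
(* rank by the number of R-predecessors, ties broken by the enumeration of T *)
pose key x := #|below x| * #|T| + enum_rank x.
have key_inj : injective key.
  move=> x y /(congr1 (modn^~ #|T|)); rewrite !modnMDl !modn_small //.
  by move/val_inj/enum_rank_inj.
exists (fun x y => key x < key y); split; last first.
  move=> x y /below_lt lt_xy; rewrite /key.
  have : #|below x| * #|T| + #|T| <= #|below y| * #|T| by rewrite -mulSnr leq_mul2r lt_xy orbT.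
  have : enum_rank x < #|T| := ltn_ord _; lia.
split; [|split].
- move=> x y xy; case: (ltngtP (key x) (key y)) => [||/key_inj exy]; [left|right|] => //.
  by rewrite exy eqxx in xy.
- by move=> y x z; exact: ltn_trans.
- by move=> x y /ltnW; rewrite leqNgt.
Qed.

Lemma SARP_ichosen_irrefl (X : finType) k (c : {set X} -> X) :
  SARP_k k c -> forall x, ~ ichosen k c x x.
Proof.
move=> sarp x xx; have := clos_trans_tn1 _ _ _ _ xx.
suff ichosen_ne y : clos_trans_n1 X (dchosen k c) x y -> y <> x by move/ichosen_ne.
case=> [{}y [xy _] | {}y z dyz xy] zx; first by rewrite zx eqxx in xy.
by rewrite zx in dyz; exact: sarp (clos_tn1_trans _ _ _ _ xy) dyz.
Qed.

Section Necessity.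

Variables (X : finType) (k : nat) (c : {set X} -> X).
Variables (r : rel X) (G : {set X} -> {set X}).
Hypotheses (r_pref : strict_pref r) (G_filter : attention_filter G).
Hypothesis G_large : forall B, B != set0 -> minn #|B| k <= #|G B|.
Hypothesis c_max : forall B, B != set0 -> is_max r (G B) (c B).

Lemma attention_small B : B != set0 -> #|B| <= k -> G B = B.
Proof.
move=> B0 Bk; have [GB _] := G_filter B0.
apply/eqP; rewrite eqEcard GB /= -[X in X <= _](minn_idPl Bk); exact: G_large.
Qed.

Lemma small_menu_pref B x : B != set0 -> #|B| <= k -> x \in B -> x != c B -> r (c B) x.
Proof.
move=> B0 Bk xB xc; have [_] := c_max B0; rewrite (attention_small B0 Bk).
by apply.
Qed.

Lemma dchosen_pref x y : dchosen k c x y -> r x y.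
Proof.
move=> [xy [B [Bk xB yB xc]]]; rewrite xc; apply: small_menu_pref => //.
  by apply/set0Pn; exists x.
by rewrite -xc eq_sym.
Qed.

Lemma ichosen_pref x y : ichosen k c x y -> r x y.
Proof.
have [_ [r_trans _]] := r_pref.
by elim=> [? ? /dchosen_pref // | a b d _ rab _ rbd]; exact: r_trans rab rbd.
Qed.

Lemma rationalizable_SARP : SARP_k k c.
Proof.
have [_ [_ r_asym]] := r_pref.
by move=> x y /ichosen_pref rxy /dchosen_pref ryx; move: (r_asym _ _ rxy); rewrite ryx.
Qed.

Lemma rationalizable_WARP_LA : WARP_LA_k k c.
Proof.
have [_ [_ r_asym]] := r_pref.
move=> S T x y S0 T0 /setIP[xS xT] /setIP[yS yT] xy Tk xc yc.
have ryx : r y x by rewrite yc; apply: small_menu_pref; rewrite -?yc // eq_sym.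
have [xG x_max] := c_max S0; rewrite -xc in xG x_max.
have yG : y \notin G S.
  apply/negP => yG; have rxy : r x y by apply: x_max; rewrite // eq_sym.
  by move: (r_asym _ _ rxy); rewrite ryx.
have Sy0 : S :\ y != set0 by apply/set0Pn; exists x; rewrite !inE xy.
have [_ G_del] := G_filter S0.
apply: (is_max_uniq r_pref (A := G S)); first by split.
by rewrite (G_del y yS yG Sy0); exact: c_max.
Qed.

End Necessity.

Lemma rationalizable_axioms (X : finType) k (c : {set X} -> X) :
  rationalizable_k k c -> SARP_k k c /\ WARP_LA_k k c.
Proof.
case=> r [G [r_pref [G_filter [G_large c_max]]]]; split.
  exact: (rationalizable_SARP r_pref G_filter G_large c_max).
exact: (rationalizable_WARP_LA r_pref G_filter G_large c_max).
Qed.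

Definition lower_contour (X : finType) (r : rel X) (c : {set X} -> X) (B : {set X}) :
  {set X} := [set z in B | (z == c B) || r (c B) z].

Section Sufficiency.

Variables (X : finType) (k : nat) (c : {set X} -> X).
Hypotheses (k_ge2 : 1 < k) (c_in : forall B, B != set0 -> c B \in B).
Hypothesis warp : WARP_LA_k k c.

Lemma exists_small_menu B : B != set0 ->
  exists T : {set X}, [/\ T \subset B, c B \in T, #|T| <= k, minn #|B| k <= #|T| & c T = c B].
Proof.
move Bn: #|B| => n; elim/ltn_ind: n B Bn => n IH B Bn B0; rewrite -Bn.
have cB := c_in B0.
have [Bk | kB] := leqP #|B| k; first by exists B; split.
have [T0 [cT0 T0B T0k]] := exists_subset_card_mem (m := k) cB (ltnW k_ge2) (ltnW kB).
have T00 : T0 != set0 by apply/set0Pn; exists (c B).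
have [cT0_eq | cT0_ne] := eqVneq (c T0) (c B).
  by exists T0; rewrite T0k.
set y := c T0 in cT0_ne.
have yT0 : y \in T0 := c_in T00.
have yB := subsetP T0B _ yT0.
have cBy : c B = c (B :\ y).
  by apply: (warp B0 T00 _ _ _ _ erefl erefl); rewrite ?inE ?cB ?cT0 ?yB ?yT0 ?T0k // eq_sym.
have card_By : #|B :\ y| = n.-1 by move: Bn; rewrite (cardsD1 y B) yB add1n => <-.
have By0 : B :\ y != set0 by apply/set0Pn; exists (c B); rewrite !inE eq_sym cT0_ne.
have [|T [TB cT Tk BkT cT_eq]] := IH _ _ _ card_By By0; first by rewrite -Bn (cardsD1 y B) yB.
exists T; split=> //.
- exact: subset_trans TB (subD1set B y).
- by rewrite cBy.
- by move: BkT; lia.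
- by rewrite cT_eq cBy.
Qed.

Variable r : rel X.
Hypothesis r_ext : forall x y, dchosen k c x y -> r x y.

Lemma pair_choice x y : x != y -> ~~ r y x -> c [set x; y] = x.
Proof.
move=> xy nryx; have xy0 : [set x; y] != set0 by apply/set0Pn; exists x; rewrite set21.
move: (c_in xy0); rewrite !inE => /orP[/eqP // | /eqP cy]; move: nryx; rewrite r_ext //.
split; first by rewrite eq_sym.
by exists [set x; y]; split; rewrite ?cards2 ?xy ?set21 ?set22.
Qed.

Lemma lower_contour_filter : attention_filter (lower_contour r c).
Proof.
move=> B B0; split; first by apply/subsetP => z; rewrite inE => /andP[].
move=> x xB; rewrite inE xB /= negb_or => /andP[xc nrcx] Bx0.
have cBx : c B = c (B :\ x).
  apply: (warp (T := [set x; c B]) B0 _ _ _ _ _ erefl (esym (pair_choice xc nrcx))).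
  - by apply/set0Pn; exists x; rewrite set21.
  - by rewrite !inE c_in ?eqxx ?orbT.
  - by rewrite !inE xB eqxx.
  - by rewrite eq_sym.
  - by rewrite cards2 xc.
apply/setP => z; rewrite !inE -cBx.
by case: (eqVneq z x) => [-> | //]; rewrite xB /= (negbTE xc) (negbTE nrcx).
Qed.

Lemma lower_contour_large B : B != set0 -> minn #|B| k <= #|lower_contour r c B|.
Proof.
move=> B0; have [T [TB cT Tk BkT cTB]] := exists_small_menu B0.
apply: leq_trans BkT (subset_leq_card _); apply/subsetP => z zT.
rewrite inE (subsetP TB _ zT); case: eqVneq => //= zc.
apply: r_ext; split; first by rewrite eq_sym.
by exists T; split; rewrite ?cTB.
Qed.

Lemma lower_contour_max B : B != set0 -> is_max r (lower_contour r c B) (c B).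
Proof.
move=> B0; split; first by rewrite inE c_in ?eqxx.
by move=> y; rewrite inE => /andP[_ /orP[/eqP -> | //]]; rewrite eqxx.
Qed.

End Sufficiency.

Lemma axioms_rationalizable (X : finType) k (c : {set X} -> X) :
  1 < k -> (forall B, B != set0 -> c B \in B) ->
  SARP_k k c -> WARP_LA_k k c -> rationalizable_k k c.
Proof.
move=> k_ge2 c_in sarp warp.
have [r [r_pref r_ichosen]] :=
  strict_linear_extension (@t_trans _ (dchosen k c)) (SARP_ichosen_irrefl sarp).
have r_ext x y (dxy : dchosen k c x y) : r x y by apply/r_ichosen/t_step.
exists r, (lower_contour r c); split=> //; split; last split.
- exact: (lower_contour_filter k_ge2 c_in warp r_ext).
- by move=> B; exact: lower_contour_large.
- by move=> B; exact: lower_contour_max.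
Qed.

Theorem theorem1 (X : finType) (k : nat) (c : {set X} -> X) :
  2 <= k ->
  (forall B : {set X}, B != set0 -> c B \in B) ->
  rationalizable_k k c <-> (SARP_k k c /\ WARP_LA_k k c).
Proof.
move=> k_ge2 c_in; split; first exact: rationalizable_axioms.
by case; exact: axioms_rationalizable.
Qed.
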